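(* Consider a tree power network $(\mathcal{V},\mathcal{E})$, $\mathcal{V}=\{1,\dots,n\}$, with fixed voltage magnitudes $|V_i|=\overline{V}_i>0$, angle limits $\underline{\theta}_{ik}\in[-\pi,0]$, $\overline{\theta}_{ik}\in[0,\pi]$ on each line, and bus power bounds $\underline{P}_i\le P_i\le\overline{P}_i$. Let $\mathcal{P}=\mathcal{P}_\theta\cap\mathcal{P}_P$, suppose $\mathcal{P}\neq\emptyset$, and assume $$-\tan^{-1}\!\Big(\frac{b_{ik}}{g_{ik}}\Big)<\underline{\theta}_{ik}\le\overline{\theta}_{ik}<\tan^{-1}\!\Big(\frac{b_{ik}}{g_{ik}}\Big)\quad\text{for all }(i,k)\in\mathcal{E}.$$ Then $\mathcal{O}(\mathcal{P})=\mathcal{O}(\mathrm{conv}(\mathcal{P}_\theta)\cap\mathcal{P}_P)$.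
   Context: Each line $(i,k)\in\mathcal{E}$ has admittance $y_{ik}=g_{ik}-jb_{ik}$ with $g_{ik},b_{ik}\ge0$. For $\theta_{ik}=\theta_i-\theta_k$ (difference of bus voltage phases), the line flows are $P_{ik}=\overline{V}_i^2 g_{ik}+\overline{V}_i\overline{V}_k b_{ik}\sin\theta_{ik}-\overline{V}_i\overline{V}_k g_{ik}\cos\theta_{ik}$ and $P_{ki}=\overline{V}_k^2 g_{ik}-\overline{V}_i\overline{V}_k b_{ik}\sin\theta_{ik}-\overline{V}_i\overline{V}_k g_{ik}\cos\theta_{ik}$. The angle-constrained flow region of line $(i,k)$, $\mathcal{F}_{\theta_{ik}}\subset\mathbb{R}^2$, is the set of $(P_{ik},P_{ki})$ as $\theta_{ik}$ ranges over $[\underline{\theta}_{ik},\overline{\theta}_{ik}]$; $\mathcal{F}_\theta=\prod_{(i,k)\in\mathcal{E}}\mathcal{F}_{\theta_{ik}}$. $\mathbf{A}$ is the $n\times2|\mathcal{E}|$ matrix with $A(i,(k,l))=1$ if $i=k$ and $0$ otherwise, so $(\mathbf{A}\mathbf{f})_i=\sum_{k\sim i}P_{ik}$. $\mathcal{P}_\theta=\mathbf{A}\mathcal{F}_\theta$ and $\mathcal{P}_P=\{\mathbf{p}\in\mathbb{R}^n:\underline{P}_i\le P_i\le\overline{P}_i\ \forall i\}$. For $\mathcal{A}\subseteq\mathbb{R}^m$, $\mathcal{O}(\mathcal{A})$ is the set of Pareto-optimal points (no $y\in\mathcal{A}$ with $y\le x$ componentwise, strict in some coordinate); $\mathrm{conv}$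 denotes convex hull. *)

From HB Require Import structures.
From mathcomp Require Import all_boot all_order all_algebra.
From mathcomp Require Import all_classical all_reals all_analysis.
Set Implicit Arguments. Unset Strict Implicit. Unset Printing Implicit Defensive.
Import Order.TTheory GRing.Theory Num.Theory.
Local Open Scope ring_scope.
Local Open Scope classical_set_scope.

Section PowerDefs.
Variables (R : realType) (n : nat).

Definition adj (E : {set 'I_n * 'I_n}) : rel 'I_n :=
  fun i k => ((i, k) \in E) || ((k, i) \in E).

Definition is_tree (E : {set 'I_n * 'I_n}) : Prop :=
  [/\ (0 < n)%N,
      (forall e, e \in E -> e.1 != e.2),
      (forall i k, (i, k) \in E -> (k, i) \notin E),
      (forall i k, connect (adj E) i k) &
      #|E| = n.-1].

Definition Edir (E : {set 'I_n * 'I_n}) : {set 'I_n * 'I_n} :=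
  E :|: [set (e.2, e.1) | e in E].

(* line flows of line (i,k) as functions of theta_ik *)
Definition Pik (V : 'I_n -> R) (g b : 'I_n -> 'I_n -> R) (i k : 'I_n) (t : R) : R :=
  V i ^+ 2 * g i k + V i * V k * b i k * sin t - V i * V k * g i k * cos t.
Definition Pki (V : 'I_n -> R) (g b : 'I_n -> 'I_n -> R) (i k : 'I_n) (t : R) : R :=
  V k ^+ 2 * g i k - V i * V k * b i k * sin t - V i * V k * g i k * cos t.

(* F_theta : flow vectors indexed by directed edges (values off Edir irrelevant) *)
Definition F_theta (E : {set 'I_n * 'I_n}) (V : 'I_n -> R)
  (g b lo hi : 'I_n -> 'I_n -> R) : set ('I_n * 'I_n -> R) :=
  [set f | forall i k, (i, k) \in E ->
     exists t, lo i k <= t <= hi i k /\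
       f (i, k) = Pik V g b i k t /\ f (k, i) = Pki V g b i k t].

Definition Amap (E : {set 'I_n * 'I_n}) (f : 'I_n * 'I_n -> R) : 'I_n -> R :=
  fun i => \sum_(d in Edir E | d.1 == i) f d.

Definition P_theta (E : {set 'I_n * 'I_n}) (V : 'I_n -> R)
  (g b lo hi : 'I_n -> 'I_n -> R) : set ('I_n -> R) :=
  Amap E @` F_theta E V g b lo hi.

Definition P_P (Plo Phi : 'I_n -> R) : set ('I_n -> R) :=
  [set p | forall i, Plo i <= p i <= Phi i].

End PowerDefs.

Definition convex_hull {R : realType} {I : Type} (A : set (I -> R)) : set (I -> R) :=
  [set x | exists (m : nat) (w : 'I_m -> R) (pts : 'I_m -> I -> R),
     (forall j, 0 <= w j) /\ \sum_(j < m) w j = 1 /\ (forall j, A (pts j)) /\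
     forall i, x i = \sum_(j < m) w j * pts j i].

Definition pareto {R : realType} {I : Type} (A : set (I -> R)) : set (I -> R) :=
  [set x | A x /\ ~ exists y, A y /\ (forall i, y i <= x i) /\ exists i, y i < x i].

(* arctan(b/g), with the convention arctan(+oo) = pi/2 when g = 0 *)
Definition crit_angle {R : realType} (g b : R) : R :=
  if g == 0 then pi / 2 else atan (b / g).

From HB Require Import structures.
From mathcomp Require Import all_boot all_order all_algebra.
From mathcomp Require Import all_classical all_reals all_analysis.
From mathcomp Require Import ring lra zify.
Import Order.TTheory GRing.Theory Num.Theory.
Import numFieldNormedType.Exports.

(* Under the critical-angle condition each line behaves monotonically: the power
   leaving one end increases and the power leaving the other end decreases with the
   angle difference, and the arc of line flows is convex.  Root the tree and give
   every vertex the angle difference to its parent.  Convexity of the arcs shows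
   that every point of conv(P_theta) dominates a point of P_theta.  A bottom-up
   induction over the tree, using the intermediate value theorem on each line, shows
   that whenever x dominates a point of P_theta and p is in P_theta, some y in
   P_theta satisfies min(x, p) <= y <= x.  Applied with x Pareto-optimal in one of
   the two sets and p in P_theta and in the power box, this yields both inclusions. *)

Set Implicit Arguments.
Unset Strict Implicit.
Unset Printing Implicit Defensive.

Local Open Scope ring_scope.

Section CriticalAngle.
Variable R : realType.
Implicit Types g b s : R.

Lemma crit_angle_le_pi2 g b : 0 <= g -> crit_angle g b <= pi / 2.
Proof. by move=> g0; rewrite /crit_angle; case: ifP => _ //; exact/ltW/atan_ltpi2. Qed.

Lemma lt_crit_angle_pi2 g b s : 0 <= g ->
  - crit_angle g b < s < crit_angle g b -> - (pi / 2) < s < pi / 2.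
Proof.
move=> g0 /andP[c1 c2]; have c := crit_angle_le_pi2 b g0.
by apply/andP; split; lra.
Qed.

(* For a line of admittance [g - jb], the two quantities are, up to the factor
   [V_i V_k], the derivatives of [-Pki] and [Pik] at angle [s]. *)
Lemma crit_angle_cases g b s : 0 <= g -> 0 <= b ->
  - crit_angle g b < s < crit_angle g b ->
  (b = 0 /\ g = 0) \/ (0 < b * cos s - g * sin s /\ 0 < b * cos s + g * sin s).
Proof.
move=> g0 b0 sI; have /andP[s1 s2] := sI.
have cs : 0 < cos s by apply: cos_gt0_pihalf; exact: lt_crit_angle_pi2 g0 sI.
have [gz|gn0] := eqVneq g 0.
  rewrite gz !mul0r subr0 addr0; have [->|bn0] := eqVneq b 0; first by left.
  by right; rewrite mulr_gt0 // lt_neqAle eq_sym bn0.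
have gp : 0 < g by rewrite lt_neqAle eq_sym gn0.
move: s1 s2; rewrite /crit_angle (negbTE gn0) => s1 s2.
have [bz|bn0] := eqVneq b 0.
  by move: s1 s2; rewrite bz mul0r atan0 oppr0 => s1 s2; have := lt_trans s1 s2; rewrite ltxx.
right.
have s_pi2 : s \in `](- (pi / 2)), (pi / 2)[ by rewrite in_itv /=; exact: lt_crit_angle_pi2 g0 sI.
have atanI (y : R) : atan y \in `](- (pi / 2)), (pi / 2)[ by rewrite in_itv /= atan_gtNpi2 atan_ltpi2.
have t2 : tan s < b / g by rewrite -[b / g]atanK ltr_tan.
have t1 : - (b / g) < tan s by rewrite -[- (b / g)]atanK ltr_tan // atanN.
have e2 : sin s < b / g * cos s by rewrite -ltr_pdivrMr.
have e1 : - (b / g) * cos s < sin s by rewrite -ltr_pdivlMr.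
have gbg : g * (b / g) = b by rewrite mulrC divfK.
split.
- by have := e2; rewrite -(ltr_pM2l gp) mulrA gbg; lra.
- by have := e1; rewrite -(ltr_pM2l gp) mulrA mulrN gbg; lra.
Qed.

End CriticalAngle.

Section ConvexCombination.
Variable R : realType.
Variables (m : nat) (w : 'I_m -> R).
Hypothesis w_ge0 : forall j, 0 <= w j.
Hypothesis w_sum1 : \sum_(j < m) w j = 1.

Lemma convex_comb_itv (X : 'I_m -> R) (a c : R) :
  (forall j, a <= X j <= c) -> a <= \sum_(j < m) w j * X j <= c.
Proof.
move=> HX; rewrite -[a]mul1r -[c]mul1r -w_sum1 !mulr_suml.
by apply/andP; split; apply: ler_sum => j _; apply: ler_wpM2l => //; case/andP: (HX j).
Qed.

Lemma convex_comb_affine (X Y : 'I_m -> R) (N1 N2 a c : R) :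
  \sum_(j < m) w j * (N1 * (X j - a) + N2 * (Y j - c)) =
  N1 * (\sum_(j < m) w j * X j - a) + N2 * (\sum_(j < m) w j * Y j - c).
Proof.
transitivity (\sum_(j < m) (N1 * (w j * X j) + N2 * (w j * Y j) - (N1 * a + N2 * c) * w j)).
  by apply: eq_bigr => j _; ring.
by rewrite sumrB big_split /= -!mulr_sumr w_sum1; ring.
Qed.

End ConvexCombination.

Lemma continuous_sin_cos_comb (R : realType) (a c d : R) :
  continuous (fun t : R => a + c * sin t - d * cos t).
Proof.
move=> x; apply: cvgB; last by apply: cvgM; [exact: cvg_cst | exact: continuous_cos].
by apply: cvgD; [exact: cvg_cst | apply: cvgM; [exact: cvg_cst | exact: continuous_sin]].
Qed.

Section LineFlows.
Variables (R : realType) (n : nat) (V : 'I_n -> R) (g b : 'I_n -> 'I_n -> R) (i k : 'I_n).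
Hypotheses (Vi_gt0 : 0 < V i) (Vk_gt0 : 0 < V k) (g_ge0 : 0 <= g i k) (b_ge0 : 0 <= b i k).

Local Notation Pik := (Pik V g b i k).
Local Notation Pki := (Pki V g b i k).
Local Notation c := (crit_angle (g i k) (b i k)).

Lemma continuous_Pik : continuous Pik.
Proof. exact: continuous_sin_cos_comb. Qed.

Lemma continuous_Pki : continuous Pki.
Proof.
have -> : Pki = fun t => V k ^+ 2 * g i k + (- (V i * V k * b i k)) * sin t
                         - V i * V k * g i k * cos t.
  by apply: funext => t; rewrite /Pki mulNr.
exact: continuous_sin_cos_comb.
Qed.

Lemma line_flows_monotone t1 t2 : - c < t1 -> t1 <= t2 -> t2 < c ->
  Pik t1 <= Pik t2 /\ Pki t2 <= Pki t1.
Proof.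
move=> c1 t12 c2; have cpi2 := crit_angle_le_pi2 (b i k) g_ge0.
suff mono m d : - c < m < c -> 0 <= d <= pi ->
    Pik (m - d) <= Pik (m + d) /\ Pki (m + d) <= Pki (m - d).
  have := mono ((t1 + t2) / 2) ((t2 - t1) / 2).
  have -> : (t1 + t2) / 2 - (t2 - t1) / 2 = t1 by field.
  have -> : (t1 + t2) / 2 + (t2 - t1) / 2 = t2 by field.
  by have := pi_gt0 R; move=> pi0; apply; apply/andP; split; lra.
move=> mI dI; have sin_d := sin_ge0_pi dI.
have c0 : 0 <= 2 * (V i * V k) * sin d by rewrite !mulr_ge0 // ltW.
have [tanD tanB] : 0 <= b i k * cos m + g i k * sin m /\ 0 <= b i k * cos m - g i k * sin m.
  have [[-> ->]|[p1 p2]] := crit_angle_cases g_ge0 b_ge0 mI; last by rewrite !ltW.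
  by rewrite !mul0r addr0 subr0.
split; rewrite -subr_ge0.
- have -> : Pik (m + d) - Pik (m - d) =
            2 * (V i * V k) * sin d * (b i k * cos m + g i k * sin m).
    by rewrite /Pik sinB cosB sinD cosD; ring.
  exact: mulr_ge0.
- have -> : Pki (m - d) - Pki (m + d) =
            2 * (V i * V k) * sin d * (b i k * cos m - g i k * sin m).
    by rewrite /Pki sinB cosB sinD cosD; ring.
  exact: mulr_ge0.
Qed.

(* The arc of flows lies on one side of its tangent at [s], whose normal is
   [(b cos s - g sin s, b cos s + g sin s)]. *)
Lemma line_flows_support s t :
  0 <= (b i k * cos s - g i k * sin s) * (Pik t - Pik s)
     + (b i k * cos s + g i k * sin s) * (Pki t - Pki s).
Proof.
have -> : (b i k * cos s - g i k * sin s) * (Pik t - Pik s)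
     + (b i k * cos s + g i k * sin s) * (Pki t - Pki s)
  = 2 * (V i * V k * b i k * g i k) * ((cos s ^+ 2 + sin s ^+ 2) - cos (t - s)).
  by rewrite /Pik /Pki cosB; ring.
by rewrite cos2Dsin2 !mulr_ge0 ?subr_ge0 ?cos_le1 // ltW.
Qed.

Lemma line_flows_convex_comb (lo hi : R) m (w : 'I_m -> R) (ts : 'I_m -> R) :
  - c < lo -> lo <= hi -> hi < c ->
  (forall j, 0 <= w j) -> \sum_(j < m) w j = 1 -> (forall j, lo <= ts j <= hi) ->
  exists s, lo <= s <= hi /\
    Pik s <= \sum_(j < m) w j * Pik (ts j) /\ Pki s <= \sum_(j < m) w j * Pki (ts j).
Proof.
move=> clo lohi hic w0 w1 ts_in.
set u := \sum_(j < m) w j * Pik (ts j); set v := \sum_(j < m) w j * Pki (ts j).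
have mono t1 t2 : lo <= t1 -> t1 <= t2 -> t2 <= hi -> Pik t1 <= Pik t2 /\ Pki t2 <= Pki t1.
  by move=> *; apply: line_flows_monotone; lra.
have v_in : Pki hi <= v <= Pki lo.
  apply: convex_comb_itv => // j; have /andP[t1 t2] := ts_in j.
  by rewrite (mono _ _ t1 t2 (lexx hi)).2 (mono _ _ (lexx lo) t1 t2).2.
have [s sI vs] : exists2 s, s \in `[lo, hi] & Pki s = v.
  apply: IVT => //; first exact/continuous_subspaceT/continuous_Pki.
  by case/andP: v_in => v1 v2; rewrite ge_min le_max v1 v2 orbT.
move: sI; rewrite in_itv /= => /andP[s1 s2].
exists s; split; first by rewrite s1 s2.
split; last by rewrite vs.
have sc : - c < s < c by apply/andP; split; lra.
have [[bz gz]|[p1 _]] := crit_angle_cases g_ge0 b_ge0 sc.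
  have Pik0 t : Pik t = 0 by rewrite /Pik bz gz !mulr0 !mul0r; lra.
  by rewrite /u Pik0 big1 // => j _; rewrite Pik0 mulr0.
have : 0 <= \sum_(j < m) w j * ((b i k * cos s - g i k * sin s) * (Pik (ts j) - Pik s)
                                + (b i k * cos s + g i k * sin s) * (Pki (ts j) - Pki s)).
  by apply: sumr_ge0 => j _; rewrite mulr_ge0 // line_flows_support.
rewrite convex_comb_affine // -/u -/v vs subrr mulr0 addr0.
by rewrite pmulr_rge0 // subr_ge0.
Qed.

End LineFlows.

Local Open Scope classical_set_scope.

Section IntervalSums.
Variable R : realType.

Lemma is_interval_continuous_image (A : set R) (f : R -> R) :
  continuous f -> is_interval A -> is_interval (f @` A).
Proof.
move=> f_cont /connected_intervalP A_conn; apply/connected_intervalP.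
by apply: connected_continuous_connected => //; apply: continuous_subspaceT.
Qed.

Lemma is_interval_add (A B : set R) :
  is_interval A -> is_interval B -> is_interval [set a + c | a in A & c in B].
Proof.
move=> iA iB x y [a1 Aa1 [c1 Bc1 <-]] [a2 Aa2 [c2 Bc2 <-]] z /andP[z1 z2].
have [zc2|c2z] := lerP z (a1 + c2).
  exists a1 => //; exists (z - a1); last by rewrite addrC subrK.
  by apply: (iB c1 c2) => //; apply/andP; split; lra.
exists (z - c2); last by exists c2 => //; rewrite subrK.
by apply: (iA a1 a2) => //; apply/andP; split; lra.
Qed.

Variables (T : eqType) (P : pred T) (F : T -> R -> R) (A : T -> set R).

Definition sum_range (s : seq T) : set R :=
  [set \sum_(i <- s | P i) F i (t i) | t in [set t | forall i, P i -> A i (t i)]].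

Lemma sum_range_cons w s : w \notin s -> P w ->
  sum_range (w :: s) = [set a + c | a in F w @` A w & c in sum_range s].
Proof.
move=> ws Pw; apply/seteqP; split => x.
  case=> t tA <-; rewrite big_cons Pw.
  exists (F w (t w)); first by exists (t w) => //; exact: tA.
  by exists (\sum_(i <- s | P i) F i (t i)) => //; exists t.
case=> _ [y Ay <-] [_ [t tA <-] <-].
exists (fun u => if u == w then y else t u).
  by move=> i Pi; case: eqP => [->|_]; [exact: Ay | exact: tA].
rewrite big_cons Pw eqxx; congr (_ + _).
rewrite big_seq_cond [RHS]big_seq_cond; apply: eq_bigr => i /andP[si _].
by case: eqP => // iw; move: ws; rewrite -iw si.
Qed.

Lemma is_interval_sum_range s : uniq s ->
  (forall i, P i -> is_interval (F i @` A i)) -> is_interval (sum_range s).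
Proof.
move=> s_uniq FA; elim: s s_uniq => [_|w s IH /andP[ws s_uniq]].
  move=> x y [t tA <-] [t' _ <-] z; rewrite !big_nil => z0.
  by exists t => //; rewrite big_nil; apply/eqP; rewrite eq_le.
have [Pw|nPw] := boolP (P w).
  by rewrite sum_range_cons //; apply: is_interval_add; [exact: FA | exact: IH].
suff -> : sum_range (w :: s) = sum_range s by exact: IH.
by rewrite /sum_range; congr image; apply: funext => t; rewrite big_cons (negbTE nPw).
Qed.

End IntervalSums.

Section RootedTree.
Variables (T : finType) (r : T) (par : T -> T) (dep : T -> nat).
Hypothesis dep_root : dep r = 0%N.
Hypothesis dep_par : forall v, v != r -> (dep (par v)).+1 = dep v.

Definition child w v := (w != r) && (par w == v).
Definition ancestor v u := (dep v <= dep u)%N && (iter (dep u - dep v) par u == v).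

(* The child of [v] on the path from [v] down to a proper descendant [u]. *)
Definition branch v u := iter (dep u - dep v).-1 par u.

Lemma dep_iter_par j u : (j <= dep u)%N -> dep (iter j par u) = (dep u - j)%N.
Proof.
elim: j => [|j IH] ju; first by rewrite subn0.
have dj : dep (iter j par u) = (dep u - j)%N by apply/IH/ltnW.
have jr : iter j par u != r.
  by apply/eqP => e; move: dj; rewrite e dep_root => /esym/eqP; rewrite subn_eq0 leqNgt ju.
by have := dep_par jr; rewrite iterS dj; lia.
Qed.

Lemma child_dep w v : child w v -> dep w = (dep v).+1.
Proof. by case/andP => wr /eqP <-; rewrite dep_par. Qed.

Lemma child_asym w v : child w v -> child v w -> False.
Proof. by move=> /child_dep d1 /child_dep d2; move: (leqnn (dep w)); rewrite {1}d1 d2 ltnNge leqnSn. Qed.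

Lemma ancestor_refl v : ancestor v v.
Proof. by rewrite /ancestor leqnn subnn /=. Qed.

Lemma ancestor_dep v u : ancestor v u -> (dep v <= dep u)%N.
Proof. by case/andP. Qed.

Lemma ancestor_root u : ancestor r u.
Proof.
rewrite /ancestor dep_root subn0 /=; apply/eqP.
have := dep_iter_par (leqnn (dep u)); rewrite subnn.
by apply: contra_eq => nr; rewrite -(dep_par nr).
Qed.

Lemma ancestor_child w v u : child w v -> ancestor w u -> ancestor v u.
Proof.
move=> wv /andP[wu /eqP it]; have dw := child_dep wv; case/andP: wv => _ /eqP pw.
have lt_vu : (dep v < dep u)%N by rewrite -dw.
rewrite /ancestor (ltnW lt_vu) /=.
by rewrite -[in iter _](subnSK lt_vu) -dw iterS it pw eqxx.
Qed.

Lemma ancestor_childr v u c : ancestor v u -> child c u -> ancestor v c.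
Proof.
move=> /andP[vu /eqP it] cu; have dc := child_dep cu; case/andP: cu => _ /eqP pc.
by rewrite /ancestor dc (leq_trans vu (leqnSn _)) subSn // iterSr pc it eqxx.
Qed.

Lemma branchP v u : ancestor v u -> u != v ->
  child (branch v u) v /\ ancestor (branch v u) u.
Proof.
move=> /andP[vu /eqP it] uv.
have lt_vu : (dep v < dep u)%N.
  rewrite ltn_neqAle vu andbT; apply: contraNneq uv => e.
  by rewrite -it -e subnn.
have dw : dep (branch v u) = (dep v).+1 by rewrite dep_iter_par; lia.
split.
- apply/andP; split; first by apply: contra_eq_neq dw => ->; rewrite dep_root.
  by rewrite -iterS prednK ?subn_gt0 // it.
- by rewrite /ancestor dw lt_vu subnS /branch eqxx.
Qed.

Lemma branch_child w v u : child w v -> ancestor w u -> branch v u = w.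
Proof. by move=> /child_dep dw /andP[_ /eqP it]; rewrite /branch -subnS -dw. Qed.

Lemma subtree_ind (Q : T -> Prop) :
  (forall v, (forall w, child w v -> Q w) -> Q v) -> forall v, Q v.
Proof.
move=> IH; suff Qk k v : (forall u, ancestor v u -> (dep u <= dep v + k)%N) -> Q v.
  by move=> v; apply: (Qk (\max_u dep u)) => u _; exact: leq_trans (leq_bigmax u) (leq_addl _ _).
elim: k v => [|k IHk] v hv; apply: IH => w wv.
  by have := hv w (ancestor_child wv (ancestor_refl w)); rewrite (child_dep wv) addn0 ltnn.
apply: IHk => u wu; have := hv u (ancestor_child wv wu).
by rewrite (child_dep wv) addnS addSn.
Qed.

End RootedTree.

Lemma convex_hull_sub (R : realType) (I : Type) (A : set (I -> R)) : A `<=` convex_hull A.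
Proof.
move=> p Ap; exists 1%N, (fun _ => 1), (fun _ => p).
by split => //; split; [rewrite big_ord1 | split => // i; rewrite big_ord1 mul1r].
Qed.

Section TreeFlows.
Variables (R : realType) (T : finType) (r : T) (par : T -> T) (dep : T -> nat).
Hypothesis dep_root : dep r = 0%N.
Hypothesis dep_par : forall v, v != r -> (dep (par v)).+1 = dep v.

(* [Pup v t] and [Pdown v t] are the powers leaving [v] and [par v] on the line
   joining them when its angle parameter is [t]. *)
Variables (l h : T -> R) (Pup Pdown : T -> R -> R).
Hypothesis Pup_cont : forall v, continuous (Pup v).
Hypothesis Pdown_cont : forall v, continuous (Pdown v).
Hypothesis Pup_Pdown_mono : forall v t1 t2, l v <= t1 -> t1 <= t2 -> t2 <= h v ->
  Pup v t1 <= Pup v t2 /\ Pdown v t2 <= Pdown v t1.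

Local Notation child := (child r par).
Local Notation ancestor := (ancestor par dep).

Definition in_box : set (T -> R) := [set th | forall u, l u <= th u <= h u].

Definition bus_power (th : T -> R) u := Pup u (th u) + \sum_(w | child w u) Pdown w (th w).

Lemma eq_bus_power th th' u : th u = th' u -> (forall w, child w u -> th w = th' w) ->
  bus_power th u = bus_power th' u.
Proof. by move=> eu ec; rewrite /bus_power eu; congr (_ + _); apply: eq_bigr => w /ec ->. Qed.

Section Between.
Variables (s ph x : T -> R).
Hypotheses (s_box : in_box s) (ph_box : in_box ph) (s_le_x : forall u, bus_power s u <= x u).

Definition lower u := Num.min (x u) (bus_power ph u).

Lemma lower_le_x u : lower u <= x u.
Proof. by rewrite /lower ge_min lexx. Qed.

Lemma lower_le_ph u : lower u <= bus_power ph u.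
Proof. by rewrite /lower ge_min lexx orbT. Qed.

Definition subtree_ok v th := forall u, ancestor v u ->
  l u <= th u <= h u /\ lower u <= bus_power th u <= x u.

Definition feasible v : set R := [set t | exists2 th, th v = t & subtree_ok v th].

Definition child_sums v := sum_range (child^~ v) Pdown feasible (index_enum T).

Lemma feasible_child_sums v t : feasible v t ->
  l v <= t <= h v /\ exists2 y, child_sums v y & lower v <= Pup v t + y <= x v.
Proof.
case=> th <- ok; have [th_v bnd_v] := ok v (ancestor_refl par dep v).
split => //; exists (\sum_(w | child w v) Pdown w (th w)) => //.
exists th => // w wv; exists th => // u wu.
exact/ok/(ancestor_child dep_par wv wu).
Qed.

Lemma feasible_glue v t tau : l v <= t <= h v -> (forall w, child w v -> feasible w (tau w)) ->
  lower v <= Pup v t + \sum_(w | child w v) Pdown w (tau w) <= x v -> feasible v t.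
Proof.
move=> tI tau_F bnd_v.
have [Th ThP] : {Th : T -> T -> R & forall w, child w v -> Th w w = tau w /\ subtree_ok w (Th w)}.
  apply: (@choice _ _ (fun w th => child w v -> th w = tau w /\ subtree_ok w th)) => w.
  have [wv|_] := boolP (child w v); last by exists tau.
  by have [th <- ok] := tau_F w wv; exists th.
pose th u := if u == v then t else Th (branch par dep v u) u.
have agree w u : child w v -> ancestor w u -> th u = Th w u.
  move=> wv wu; have vu : u != v.
    by apply: contraTneq (ancestor_dep wu) => ->; rewrite (child_dep dep_par wv) ltnn.
  by rewrite /th (negbTE vu) (branch_child dep_par wv wu).
have thv : th v = t by rewrite /th eqxx.
exists th => // u vu; have [->|uv] := eqVneq u v.
  rewrite thv; split => //; rewrite /bus_power thv.
  rewrite (eq_bigr (fun w => Pdown w (tau w))) // => w wv.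
  by rewrite (agree w w wv (ancestor_refl par dep w)); case: (ThP w wv) => ->.
have [bv bu] := branchP dep_root dep_par vu uv; set w := branch par dep v u in bv bu.
have [_ ok_w] := ThP w bv; have [th_u bnd_u] := ok_w u bu.
have -> : bus_power th u = bus_power (Th w) u.
  apply: eq_bus_power => [|c cu]; first exact: agree.
  exact: agree (ancestor_childr dep_par bu cu).
by rewrite (agree w u bv bu).
Qed.

Lemma is_interval_child_sums v : (forall w, child w v -> is_interval (feasible w)) ->
  is_interval (child_sums v).
Proof.
move=> iF; apply: is_interval_sum_range (index_enum_uniq T) _ => w wv.
exact: is_interval_continuous_image (@Pdown_cont w) (iF w wv).
Qed.

Lemma feasible_of_child_sums v t y1 y2 : is_interval (child_sums v) -> l v <= t <= h v ->
  child_sums v y1 -> child_sums v y2 -> lower v <= Pup v t + y1 -> Pup v t + y2 <= x v ->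
  feasible v t.
Proof.
move=> iS tI y1S y2S lo1 hi2.
suff [_ [tau tau_F <-] bnd] : exists2 y, child_sums v y & lower v <= Pup v t + y <= x v.
  exact: feasible_glue tI tau_F bnd.
have lx := lower_le_x v.
have [hi1|hi1] := lerP (Pup v t + y1) (x v); first by exists y1 => //; apply/andP.
have [lo2|lo2] := lerP (lower v) (Pup v t + y2); first by exists y2 => //; apply/andP.
exists (x v - Pup v t); last by apply/andP; split; lra.
by apply: (iS y2 y1) => //; apply/andP; split; lra.
Qed.

Lemma is_interval_feasible v : is_interval (child_sums v) -> is_interval (feasible v).
Proof.
move=> iS t1 t2 F1 F2 t /andP[le1 le2].
have [/andP[l1 h1] [y1 y1S /andP[lo1 _]]] := feasible_child_sums F1.
have [/andP[l2 h2] [y2 y2S /andP[_ hi2]]] := feasible_child_sums F2.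
have [m1 _] := Pup_Pdown_mono l1 le1 (le_trans le2 h2).
have [m2 _] := Pup_Pdown_mono (le_trans l1 le1) le2 h2.
apply: (feasible_of_child_sums iS _ y1S y2S); [|lra|lra].
by rewrite (le_trans l1 le1) (le_trans le2 h2).
Qed.

Definition subtree_invariant v := [/\ is_interval (feasible v),
  exists2 t, feasible v t & Pdown v (ph v) <= Pdown v t &
  exists2 t, feasible v t & Pdown v t <= Pdown v (s v)].

Section Step.
Variable v : T.
Hypothesis children_inv : forall w, child w v -> subtree_invariant w.

Let iS : is_interval (child_sums v).
Proof. by apply: is_interval_child_sums => w /children_inv []. Qed.

Lemma child_sums_extremes :
  (exists2 y, child_sums v y & \sum_(w | child w v) Pdown w (ph w) <= y) /\
  (exists2 y, child_sums v y & y <= \sum_(w | child w v) Pdown w (s w)).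
Proof.
split.
- have [tA tAP] : {tA : T -> R & forall w, child w v ->
      feasible w (tA w) /\ Pdown w (ph w) <= Pdown w (tA w)}.
    apply: (@choice _ _ (fun w t => child w v -> feasible w t /\ Pdown w (ph w) <= Pdown w t)).
    move=> w; have [wv|_] := boolP (child w v); last by exists 0.
    by have [_ [t Ft le] _] := children_inv wv; exists t.
  exists (\sum_(w | child w v) Pdown w (tA w)); first by exists tA => // w /tAP [].
  by apply: ler_sum => w /tAP [].
- have [tB tBP] : {tB : T -> R & forall w, child w v ->
      feasible w (tB w) /\ Pdown w (tB w) <= Pdown w (s w)}.
    apply: (@choice _ _ (fun w t => child w v -> feasible w t /\ Pdown w t <= Pdown w (s w))).
    move=> w; have [wv|_] := boolP (child w v); last by exists 0.
    by have [_ _ [t Ft le]] := children_inv wv; exists t.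
  exists (\sum_(w | child w v) Pdown w (tB w)); first by exists tB => // w /tBP [].
  by apply: ler_sum => w /tBP [].
Qed.

Lemma feasible_above_ph : exists2 t, feasible v t & Pdown v (ph v) <= Pdown v t.
Proof.
have [[yA yAS phA] [yB yBS sB]] := child_sums_extremes.
have [sl sh] := andP (s_box v); have [pl phh] := andP (ph_box v).
have sx := s_le_x v; have lx := lower_le_x v; have lph := lower_le_ph v.
rewrite /bus_power in sx lph.
have [phs|sph] := lerP (ph v) (s v).
  have [m _] := Pup_Pdown_mono pl phs sh.
  by exists (ph v) => //; apply: (feasible_of_child_sums iS _ yAS yBS); rewrite ?pl ?phh //; lra.
have [hiB|hiB] := lerP (Pup v (ph v) + yB) (x v).
  by exists (ph v) => //; apply: (feasible_of_child_sums iS _ yAS yBS); rewrite ?pl ?phh //; lra.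
have [m _] := Pup_Pdown_mono sl (ltW sph) phh.
have [t] : exists2 t, t \in `[s v, ph v]%R & Pup v t = x v - yB.
  apply: IVT; [exact: ltW | exact/continuous_subspaceT/(@Pup_cont v) |].
  by rewrite ge_min le_max; apply/andP; split; apply/orP; [left | right]; lra.
rewrite in_itv /= => /andP[t1 t2] et.
have tI : l v <= t <= h v by rewrite (le_trans sl t1) (le_trans t2 phh).
exists t; last by have [_] := Pup_Pdown_mono (le_trans sl t1) t2 phh.
by apply: (feasible_of_child_sums iS tI yBS yBS); lra.
Qed.

Lemma feasible_below_s : exists2 t, feasible v t & Pdown v t <= Pdown v (s v).
Proof.
have [[yA yAS phA] [yB yBS sB]] := child_sums_extremes.
have [sl sh] := andP (s_box v); have [pl phh] := andP (ph_box v).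
have sx := s_le_x v; have lx := lower_le_x v; have lph := lower_le_ph v.
rewrite /bus_power in sx lph.
have [phs|sph] := lerP (ph v) (s v).
  have [m _] := Pup_Pdown_mono pl phs sh.
  by exists (s v) => //; apply: (feasible_of_child_sums iS _ yAS yBS); rewrite ?sl ?sh //; lra.
have [loA|loA] := lerP (lower v) (Pup v (s v) + yA).
  by exists (s v) => //; apply: (feasible_of_child_sums iS _ yAS yBS); rewrite ?sl ?sh //; lra.
have [m _] := Pup_Pdown_mono sl (ltW sph) phh.
have [t] : exists2 t, t \in `[s v, ph v]%R & Pup v t = lower v - yA.
  apply: IVT; [exact: ltW | exact/continuous_subspaceT/(@Pup_cont v) |].
  by rewrite ge_min le_max; apply/andP; split; apply/orP; [left | right]; lra.
rewrite in_itv /= => /andP[t1 t2] et.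
have tI : l v <= t <= h v by rewrite (le_trans sl t1) (le_trans t2 phh).
exists t; last by have [_] := Pup_Pdown_mono sl t1 (le_trans t2 phh).
by apply: (feasible_of_child_sums iS tI yAS yAS); lra.
Qed.

End Step.

Lemma subtree_invariant_all v : subtree_invariant v.
Proof.
elim/(subtree_ind dep_par): v => v children_inv; split.
- by apply/is_interval_feasible/is_interval_child_sums => w /children_inv [].
- exact: feasible_above_ph.
- exact: feasible_below_s.
Qed.

Lemma bus_power_between : exists2 th, in_box th & forall u, lower u <= bus_power th u <= x u.
Proof.
have [_ [_ [th _ ok] _] _] := subtree_invariant_all r.
by exists th => u; have [] := ok u (ancestor_root dep_root dep_par u).
Qed.

End Between.

Hypothesis Pup_Pdown_convex_comb : forall v m (w : 'I_m -> R) (ts : 'I_m -> R),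
  (forall j, 0 <= w j) -> \sum_(j < m) w j = 1 -> (forall j, l v <= ts j <= h v) ->
  exists s, l v <= s <= h v /\ Pup v s <= \sum_(j < m) w j * Pup v (ts j) /\
                               Pdown v s <= \sum_(j < m) w j * Pdown v (ts j).

Definition tree_flows : set (T -> R) := bus_power @` in_box.

Lemma convex_hull_tree_flows_dominates x : convex_hull tree_flows x ->
  exists2 th, in_box th & forall u, bus_power th u <= x u.
Proof.
case=> m [w [pts [w_ge0 [w_sum1 [pts_in x_eq]]]]].
have [TH THP] : {TH : 'I_m -> T -> R & forall j, in_box (TH j) /\ bus_power (TH j) = pts j}.
  apply: (@choice _ _ (fun j th => in_box th /\ bus_power th = pts j)) => j.
  by case: (pts_in j) => th; exists th.
have [S SP] : {S : T -> R & forall v, l v <= S v <= h v /\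
    Pup v (S v) <= \sum_(j < m) w j * Pup v (TH j v) /\
    Pdown v (S v) <= \sum_(j < m) w j * Pdown v (TH j v)}.
  apply: (@choice _ _ (fun v t => l v <= t <= h v /\
    Pup v t <= \sum_(j < m) w j * Pup v (TH j v) /\
    Pdown v t <= \sum_(j < m) w j * Pdown v (TH j v))) => v.
  by apply: Pup_Pdown_convex_comb => // j; case: (THP j) => box _; exact: box.
exists S => [u|u]; first by case: (SP u).
have -> : x u = \sum_(j < m) w j * Pup u (TH j u) +
                \sum_(c | child c u) \sum_(j < m) w j * Pdown c (TH j c).
  rewrite x_eq exchange_big -big_split; apply: eq_bigr => j _.
  by case: (THP j) => _ <-; rewrite /bus_power mulrDr mulr_sumr.
by apply: lerD; [case: (SP u) => _ [] | apply: ler_sum => c _; case: (SP c) => _ []].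
Qed.

Lemma convex_hull_tree_flows_between y th0 : convex_hull tree_flows y -> in_box th0 ->
  exists2 th, in_box th & forall u, Num.min (y u) (bus_power th0 u) <= bus_power th u <= y u.
Proof.
move=> /convex_hull_tree_flows_dominates[s s_box s_le_y] th0_box.
exact: bus_power_between s_box th0_box s_le_y.
Qed.

Variables (Plo Phi : T -> R).

Definition power_box : set (T -> R) := [set p | forall u, Plo u <= p u <= Phi u].

Lemma pareto_tree_flows_sub :
  pareto (tree_flows `&` power_box) `<=` pareto (convex_hull tree_flows `&` power_box).
Proof.
move=> x [[[thx thx_box xE] Bx] x_opt].
split; first by split => //; apply: convex_hull_sub; exists thx.
case=> y [[Cy By] [y_le [i y_lt]]]; apply: x_opt.
have [th th_box th_bnd] := convex_hull_tree_flows_between Cy thx_box.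
exists y; split; last by split => //; exists i.
split => //; exists th => //; apply: funext => u.
have := th_bnd u; rewrite xE (min_idPl (y_le u)) => /andP[lo hi].
by apply/eqP; rewrite eq_le hi lo.
Qed.

Lemma pareto_convex_hull_sub : (tree_flows `&` power_box) !=set0 ->
  pareto (convex_hull tree_flows `&` power_box) `<=` pareto (tree_flows `&` power_box).
Proof.
move=> [z [[thz thz_box zE] Bz]] x [[Cx Bx] x_opt].
have [th th_box th_bnd] := convex_hull_tree_flows_between Cx thz_box.
rewrite zE in th_bnd.
have th_B : power_box (bus_power th).
  move=> i; have /andP[lo hi] := th_bnd i; have /andP[x1 x2] := Bx i; have /andP[z1 z2] := Bz i.
  by rewrite (le_trans _ lo) ?le_min ?x1 ?z1 // (le_trans hi x2).
have xE : bus_power th = x.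
  apply: funext => u; apply/eqP; rewrite eq_le; have /andP[_ ->] := th_bnd u.
  rewrite leNgt; apply/negP => lt_u; apply: x_opt; exists (bus_power th).
  split; first by split => //; apply: convex_hull_sub; exists th.
  by split; [move=> i; case/andP: (th_bnd i) | exists u].
split; first by split => //; rewrite -xE; exists th.
case=> y [[Py By] y_dom]; apply: x_opt.
by exists y; split => //; split => //; apply: convex_hull_sub.
Qed.

End TreeFlows.

Section Rooting.
Variables (n : nat) (E : {set 'I_n * 'I_n}) (r : 'I_n).
Local Close Scope classical_set_scope.

Lemma adj_sym : symmetric (adj E).
Proof. by move=> i k; rewrite /adj orbC. Qed.

Fixpoint reach (j : nat) (v : 'I_n) : bool :=
  if j is j'.+1 then [exists u, reach j' u && adj E u v] else v == r.

Lemma reach_path p x j : reach j x -> path (adj E) x p -> reach (j + size p) (last x p).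
Proof.
elim: p x j => [|y p IH] x j /= jx; first by rewrite addn0.
case/andP => xy yp; rewrite addnS -addSn; apply: IH yp => /=.
by apply/existsP; exists x; rewrite jx xy.
Qed.

Lemma bfs_tree : (forall v, connect (adj E) r v) ->
  exists par : 'I_n -> 'I_n, exists dep : 'I_n -> nat,
    [/\ dep r = 0%N, forall v, v != r -> (dep (par v)).+1 = dep v &
        forall v, v != r -> adj E (par v) v].
Proof.
move=> conn.
have reach_ex v : exists j, reach j v.
  by have /connectP[p pp ->] := conn v; exists (0 + size p)%N; apply: reach_path => /=.
pose dep v := ex_minn (reach_ex v).
have depP v : reach (dep v) v /\ forall j, reach j v -> (dep v <= j)%N.
  by rewrite /dep; case: ex_minnP.
have dep_adj u v : adj E u v -> (dep v <= (dep u).+1)%N.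
  by move=> uv; apply: (depP v).2 => /=; apply/existsP; exists u; rewrite (depP u).1.
have dep0 v : dep v = 0%N -> v = r by move=> d0; have := (depP v).1; rewrite d0 => /eqP.
have [par parP] : {par : 'I_n -> 'I_n & forall v, v != r ->
    reach (dep v).-1 (par v) && adj E (par v) v}.
  apply: (@choice _ _ (fun v u => v != r -> reach (dep v).-1 u && adj E u v)) => v.
  have [->|vr] := eqVneq v r; first by exists r.
  have := (depP v).1; case e: (dep v) => [|j] /=; first by rewrite (dep0 v e) eqxx in vr.
  by case/existsP => u uv; exists u.
exists par, dep; split.
- by apply/eqP; rewrite -leqn0; apply: (depP r).2 => /=.
- move=> v vr; have /andP[pv /dep_adj] := parP v vr.
  have := (depP _).2 _ pv; have : dep v != 0%N by apply: contra_neq vr => /dep0.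
  lia.
- by move=> v /parP /andP[].
Qed.

(* A tree has exactly [n.-1] lines and each non-root vertex owns the line to its
   parent, so these are all the lines. *)
Lemma tree_adj_child par dep : #|E| = n.-1 ->
  (forall v, v != r -> (dep (par v)).+1 = dep v) -> (forall v, v != r -> adj E (par v) v) ->
  forall i k, adj E i k = child r par i k || child r par k i.
Proof.
move=> cardE dep_par par_adj i k.
apply/idP/idP; last by case/orP => /andP[? /eqP <-]; [rewrite adj_sym|]; exact: par_adj.
pose line v := if (v, par v) \in E then (v, par v) else (par v, v).
have lineE v : v != r -> line v \in E.
  move=> vr; rewrite /line; case: ifP => // vE.
  by have := par_adj v vr; rewrite /adj vE orbF.
have line_inj : {in [set~ r] &, injective line}.
  move=> v v'; rewrite !inE => vr v'r.
  have dv := dep_par v vr; have dv' := dep_par v' v'r.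
  rewrite /line; case: ifP => _; case: ifP => _ [e1 e2] //;
    by have := congr1 dep e1; have := congr1 dep e2; lia.
have line_onto : line @: [set~ r] = E.
  apply/eqP; rewrite eqEcard (card_in_imset line_inj) cardsC1 card_ord cardE leqnn andbT.
  by apply/fintype.subsetP => e /imsetP[v vr ->]; apply: lineE; rewrite -in_setC1.
rewrite /adj -line_onto => /orP[] /imsetP[v]; rewrite in_setC1 => vr;
  by rewrite /line; case: ifP => _ [-> ->]; rewrite /child vr eqxx ?orbT.
Qed.

Lemma root_tree : is_tree E -> exists par : 'I_n -> 'I_n, exists dep : 'I_n -> nat,
  [/\ dep r = 0%N, forall v, v != r -> (dep (par v)).+1 = dep v &
      forall i k, adj E i k = child r par i k || child r par k i].
Proof.
case=> _ _ _ conn cardE; have [par [dep [dep_root dep_par par_adj]]] := bfs_tree (conn r).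
by exists par, dep; split => //; exact: tree_adj_child cardE dep_par par_adj.
Qed.

End Rooting.

Section Network.
Variables (R : realType) (n : nat) (E : {set 'I_n * 'I_n}).
Variables (V : 'I_n -> R) (g b lo hi : 'I_n -> 'I_n -> R).
Hypothesis V_gt0 : forall i, 0 < V i.
Hypothesis gb_ge0 : forall i k, (i, k) \in E -> 0 <= g i k /\ 0 <= b i k.
Hypothesis angle_crit : forall i k, (i, k) \in E ->
  - crit_angle (g i k) (b i k) < lo i k /\ lo i k <= hi i k /\ hi i k < crit_angle (g i k) (b i k).
Hypothesis E_antisym : forall i k, (i, k) \in E -> (k, i) \notin E.
Variables (r : 'I_n) (par : 'I_n -> 'I_n) (dep : 'I_n -> nat).
Hypothesis dep_par : forall v, v != r -> (dep (par v)).+1 = dep v.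
Hypothesis adj_child : forall i k, adj E i k = child r par i k || child r par k i.

Local Notation child := (child r par).

(* The angle parameter of a vertex [v] is [theta_v - theta_(par v)], whichever way the
   line joining [v] to its parent is listed in [E]; the root gets a dummy parameter. *)
Definition up_line v := (v, par v) \in E.
Definition tree_lo v := if v == r then 0 else if up_line v then lo v (par v) else - hi (par v) v.
Definition tree_hi v := if v == r then 0 else if up_line v then hi v (par v) else - lo (par v) v.
Definition tree_Pup v t := if v == r then 0 else
  if up_line v then Pik V g b v (par v) t else Pki V g b (par v) v (- t).
Definition tree_Pdown v t := if v == r then 0 else
  if up_line v then Pki V g b v (par v) t else Pik V g b (par v) v (- t).

Lemma line_to_parent v : v != r -> if up_line v then (v, par v) \in E else (par v, v) \in E.
Proof.
move=> vr; rewrite /up_line; case: ifP => // vE.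
by have := adj_child v (par v); rewrite /child vr eqxx /adj vE /= => ->.
Qed.

Lemma continuous_tree_Pup v : continuous (tree_Pup v).
Proof.
rewrite /tree_Pup; case: (v == r); first by move=> t; exact: cvg_cst.
case: (up_line v); first exact: continuous_Pik.
by move=> t; apply: continuous_comp; [exact: continuousN | exact: continuous_Pki].
Qed.

Lemma continuous_tree_Pdown v : continuous (tree_Pdown v).
Proof.
rewrite /tree_Pdown; case: (v == r); first by move=> t; exact: cvg_cst.
case: (up_line v); first exact: continuous_Pki.
by move=> t; apply: continuous_comp; [exact: continuousN | exact: continuous_Pik].
Qed.

Lemma tree_flows_monotone v t1 t2 : tree_lo v <= t1 -> t1 <= t2 -> t2 <= tree_hi v ->
  tree_Pup v t1 <= tree_Pup v t2 /\ tree_Pdown v t2 <= tree_Pdown v t1.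
Proof.
rewrite /tree_lo /tree_hi /tree_Pup /tree_Pdown; have [_|vr] := eqVneq v r; first by rewrite lexx.
have := line_to_parent vr; case: (up_line v) => e lo1 t12 hi2;
  have [g0 b0] := gb_ge0 e; have [clo [_ chi]] := angle_crit e.
  by apply: line_flows_monotone => //; lra.
by have [] := line_flows_monotone (V_gt0 _) (V_gt0 _) g0 b0 (t1 := - t2) (t2 := - t1); lra.
Qed.

Lemma tree_flows_convex_comb v m (w : 'I_m -> R) (ts : 'I_m -> R) :
  (forall j, 0 <= w j) -> \sum_(j < m) w j = 1 -> (forall j, tree_lo v <= ts j <= tree_hi v) ->
  exists s, tree_lo v <= s <= tree_hi v /\
    tree_Pup v s <= \sum_(j < m) w j * tree_Pup v (ts j) /\
    tree_Pdown v s <= \sum_(j < m) w j * tree_Pdown v (ts j).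
Proof.
move=> w_ge0 w_sum1; rewrite /tree_lo /tree_hi /tree_Pup /tree_Pdown.
have [_ _|vr ts_in] := eqVneq v r.
  by exists 0; rewrite lexx big1 // => j _; rewrite mulr0.
have := line_to_parent vr; case: (up_line v) ts_in => ts_in e;
  have [g0 b0] := gb_ge0 e; have [clo [lohi chi]] := angle_crit e.
  exact: line_flows_convex_comb.
have [|s [/andP[s1 s2] flows]] := line_flows_convex_comb (V_gt0 _) (V_gt0 _) g0 b0 clo lohi chi
  w_ge0 w_sum1 (ts := fun j => - ts j).
  by move=> j; have /andP[t1 t2] := ts_in j; apply/andP; split; lra.
exists (- s); rewrite opprK; split; first by apply/andP; split; lra.
by case: flows.
Qed.

Lemma Edir_adj d : (d \in Edir E) = adj E d.1 d.2.
Proof.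
rewrite /Edir /adj finset.in_setU; congr (_ || _); first by case: d.
apply/imsetP/idP => [[e eE ->]|dE]; first by case: e eE.
by exists (d.2, d.1) => //; case: d dE.
Qed.

Lemma Amap_bus_power (f : 'I_n * 'I_n -> R) (th : 'I_n -> R) :
  (forall i k, adj E i k -> f (i, k) = if child i k then tree_Pup i (th i) else tree_Pdown k (th k)) ->
  Amap E f = bus_power r par tree_Pup tree_Pdown th.
Proof.
move=> fE; apply: funext => u; rewrite /Amap.
have -> : \sum_(d in Edir E | d.1 == u) f d = \sum_(i | i == u) \sum_(k | adj E i k) f (i, k).
  by rewrite pair_big_dep /=; apply: eq_big => [[i k]|[]] //=; rewrite Edir_adj andbC.
rewrite big_pred1_eq (eq_bigr (fun k => (if child u k then tree_Pup u (th u) else 0)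
                                      + (if child k u then tree_Pdown k (th k) else 0))); last first.
  move=> k uk; rewrite fE //; case: ifP => c1; case: ifP => c2; rewrite ?addr0 ?add0r //.
  - by case: (child_asym dep_par c1 c2).
  - by move: uk; rewrite adj_child c1 c2.
rewrite big_split /= /bus_power -!big_mkcondr /=; congr (_ + _).
  have [->|ur] := eqVneq u r.
    by rewrite /tree_Pup eqxx big1 // => k; rewrite /child eqxx /= andbF.
  rewrite (eq_bigl (pred1 (par u))) ?big_pred1_eq // => k.
  rewrite /= adj_child; case cuk: (child u k); rewrite ?andbT ?andbF /=;
    by move: cuk; rewrite /child ur /= eq_sym => ->.
by apply: eq_bigl => k; rewrite adj_child; case: (child k u); rewrite ?orbT ?andbF ?andbT.
Qed.

Lemma F_theta_tree f : F_theta E V g b lo hi f <-> forall v, v != r ->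
  exists t, tree_lo v <= t <= tree_hi v /\ f (v, par v) = tree_Pup v t /\ f (par v, v) = tree_Pdown v t.
Proof.
rewrite /tree_lo /tree_hi /tree_Pup /tree_Pdown; split=> [Ff v vr | Hf i k ik].
  rewrite (negbTE vr); have := line_to_parent vr; case: (up_line v) => e;
    have [t [/andP[t1 t2] [f1 f2]]] := Ff _ _ e; first by exists t; rewrite t1 t2.
  by exists (- t); rewrite opprK; split => //; apply/andP; split; lra.
have : adj E i k by rewrite /adj ik.
rewrite adj_child => /orP[/andP[ir /eqP pik]|/andP[kr /eqP pki]].
  have [t [tI [f1 f2]]] := Hf i ir; move: tI f1 f2.
  by rewrite (negbTE ir) /up_line pik ik => tI f1 f2; exists t.
have [t [tI [f1 f2]]] := Hf k kr; move: tI f1 f2.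
rewrite (negbTE kr) /up_line pki (negbTE (E_antisym ik)) => /andP[t1 t2] f1 f2.
by exists (- t); split; [apply/andP; split; lra | split].
Qed.

Lemma P_theta_tree_flows :
  P_theta E V g b lo hi = tree_flows r par tree_lo tree_hi tree_Pup tree_Pdown.
Proof.
apply/seteqP; split => p.
  case=> f /F_theta_tree Ff <-.
  have [th thP] : {th : 'I_n -> R & forall v, tree_lo v <= th v <= tree_hi v /\
      (v != r -> f (v, par v) = tree_Pup v (th v) /\ f (par v, v) = tree_Pdown v (th v))}.
    apply: (@choice _ _ (fun v t => tree_lo v <= t <= tree_hi v /\
      (v != r -> f (v, par v) = tree_Pup v t /\ f (par v, v) = tree_Pdown v t))) => v.
    have [->|vr] := eqVneq v r; first by exists 0; rewrite /tree_lo /tree_hi eqxx lexx.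
    by have [t [tI ft]] := Ff v vr; exists t.
  exists th => [v|]; first by case: (thP v).
  apply/esym/Amap_bus_power => i k ik; case: ifP => [/andP[ir /eqP <-]|nik].
    by have [_ /(_ ir)[]] := thP i.
  move: ik; rewrite adj_child nik => /andP[kr /eqP <-].
  by have [_ /(_ kr)[]] := thP k.
case=> th th_box <-.
pose f d := if child d.1 d.2 then tree_Pup d.1 (th d.1) else tree_Pdown d.2 (th d.2).
exists f; last exact: Amap_bus_power.
apply/F_theta_tree => v vr; exists (th v); split; first exact: th_box.
have cv : child v (par v) by rewrite /child vr eqxx.
have ncv : child (par v) v = false by apply/negP => /(child_asym dep_par cv).
by rewrite /f /= cv ncv.
Qed.

End Network.

Theorem lemma3 (R : realType) (n : nat) (E : {set 'I_n * 'I_n})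
  (V : 'I_n -> R) (g b lo hi : 'I_n -> 'I_n -> R) (Plo Phi : 'I_n -> R) :
  is_tree E ->
  (forall i, 0 < V i) ->
  (forall i k, (i, k) \in E -> 0 <= g i k /\ 0 <= b i k) ->
  (forall i k, (i, k) \in E -> - pi <= lo i k <= 0 /\ 0 <= hi i k <= pi) ->
  (forall i k, (i, k) \in E ->
     - crit_angle (g i k) (b i k) < lo i k /\ lo i k <= hi i k /\
     hi i k < crit_angle (g i k) (b i k)) ->
  (P_theta E V g b lo hi `&` P_P Plo Phi) !=set0 ->
  pareto (P_theta E V g b lo hi `&` P_P Plo Phi) =
  pareto (convex_hull (P_theta E V g b lo hi) `&` P_P Plo Phi).
Proof.
(* The bounds [-pi <= lo] and [hi <= pi] follow from the critical-angle condition. *)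
move=> tree V_gt0 gb_ge0 _ angle_crit nonempty.
have [n_gt0 _ E_antisym _ _] := tree.
have [par [dep [dep_root dep_par adj_child]]] := root_tree (Ordinal n_gt0) tree.
rewrite (P_theta_tree_flows V g b lo hi E_antisym dep_par adj_child) in nonempty *.
have mono := tree_flows_monotone V_gt0 gb_ge0 angle_crit adj_child.
have convex := tree_flows_convex_comb V_gt0 gb_ge0 angle_crit adj_child.
apply/seteqP; split; [apply: (pareto_tree_flows_sub dep_root dep_par) |
                      apply: (pareto_convex_hull_sub dep_root dep_par)] => //.
all: first [exact: continuous_tree_Pup | exact: continuous_tree_Pdown].
Qed.
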